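(* For every $\varphi\in\mathcal{L}_{CoRGAL}$ and every maximal consistent theory $x$: $\varphi\in x$ if and only if $(M^C,x)\models\varphi$.
   Context: Fix a finite set $A$ of agents and a countable set $P$ of propositional variables. The language $\mathcal{L}_{CoRGAL}$ is given by $\varphi ::= p \mid \neg\varphi \mid (\varphi\wedge\varphi) \mid K_a\varphi \mid [\varphi]\varphi \mid [G,\varphi]\varphi \mid [\langle G\rangle]\varphi$ with $p\in P$, $a\in A$, $G\subseteq A$. $\mathcal{L}_{EL}$ is the fragment built only from $p,\neg,\wedge,K_a$. Duals: $\langle\psi\rangle\varphi:=\neg[\psi]\neg\varphi$, $\langle G,\psi\rangle\varphi:=\neg[G,\psi]\neg\varphi$. $\mathcal{L}^G_{EL}$ is the set of formulas $\bigwedge_{i\in G}K_i\varphi_i$ with $\varphi_i\in\mathcal{L}_{EL}$; $\psi_G,\chi_G$ range over it. Semantics over epistemic models $M=(W,\sim,V)$ ($W\ne\emptyset$, $\sim_a$ equivalence relations, $V:P\to\mathcal{P}(W)$; $M^\varphi$ the restriction to $\{v:(M,v)\models\varphi\}$): standard for $p,\neg,\wedge,K_a$; $[\varphi]\psi$ holds at $w$ iff $(M,w)\models\varphi$ implies $(M^\varphi,w)\models\psi$; $[G,\chi]\varphi$ holds iff $\chi$ holds and $[\psi_G\wedge\chi]\varphi$ holds for all $\psi_G$; $[\langle G\rangle]\varphi$ holds iff for every $\psi_G$ there is $\chi_{A\setminus G}$ with $\psi_G\to\langle\psi_G\wedge\chi_{A\setminus G}\rangle\varphi$ holding. Necessity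 forms: $\eta ::= \sharp \mid \varphi\to\eta(\sharp)\mid K_a\eta(\sharp)\mid[\varphi]\eta(\sharp)$, $\eta(\varphi)$ replaces the unique $\sharp$ by $\varphi$. $\mathbf{CoRGAL}$ is the smallest set containing all instances of (A0) propositional tautologies; (A1) $K_a(\varphi\to\psi)\to(K_a\varphi\to K_a\psi)$; (A2) $K_a\varphi\to\varphi$; (A3) $K_a\varphi\to K_aK_a\varphi$; (A4) $\neg K_a\varphi\to K_a\neg K_a\varphi$; (A5) $[\varphi]p\leftrightarrow(\varphi\to p)$; (A6) $[\varphi]\neg\psi\leftrightarrow(\varphi\to\neg[\varphi]\psi)$; (A7) $[\varphi](\psi\wedge\chi)\leftrightarrow([\varphi]\psi\wedge[\varphi]\chi)$; (A8) $[\varphi]K_a\psi\leftrightarrow(\varphi\to K_a[\varphi]\psi)$; (A9) $[\varphi][\psi]\chi\leftrightarrow[\varphi\wedge[\varphi]\psi]\chi$; (A10) $[G,\chi]\varphi\to\chi\wedge[\psi_G\wedge\chi]\varphi$; (A11) $[\langle G\rangle]\varphi\to\langle A\setminus G,\psi_G\rangle\varphi$; closed under (R0) modus ponens; (R1) $\varphi/K_a\varphi$; (R2) $\varphi/[\psi]\varphi$; (R3) $\varphi/[G,\chi]\varphi$; (R4) $\varphi/[\langle G\rangle]\varphi$; (R5) from $\eta(\chi\wedge[\psi_G\wedge\chi]\varphi)$ for all $\psi_G$ infer $\eta([G,\chi]\varphi)$; (R6) from $\eta(\langle A\setminus G,\psi_G\rangle\varphi)$ for all $\psi_G$ infer $\eta([\langle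 G\rangle]\varphi)$. A theory is a set of formulas containing $\mathbf{CoRGAL}$ and closed under (R0), (R5), (R6); it is consistent iff $\bot\notin x$ and maximal iff for each $\varphi$, $\varphi\in x$ or $\neg\varphi\in x$. The canonical model $M^C=(W^C,\sim^C,V^C)$ has $W^C$ the set of maximal consistent theories, $x\sim^C_a y$ iff $\{\varphi:K_a\varphi\in x\}=\{\varphi:K_a\varphi\in y\}$, and $x\in V^C(p)$ iff $p\in x$. *)

From mathcomp Require Import all_boot.
Set Implicit Arguments. Unset Strict Implicit. Unset Printing Implicit Defensive.

Section CoRGAL.
Variables (A : finType) (P : countType).
(* p0 : a fixed propositional variable, only used to write the constant
   formula T := ~(p0 /\ ~p0) (the empty conjunction). *)
Variable p0 : P.

Inductive form : Type :=
| Var : P -> form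
| Neg : form -> form
| And : form -> form -> form
| Kn : A -> form -> form
| Ann : form -> form -> form
| GAnn : {set A} -> form -> form -> form
| CoalAnn : {set A} -> form -> form.

Definition Imp (f g : form) : form := Neg (And f (Neg g)).
Definition Iff (f g : form) : form := And (Imp f g) (Imp g f).
Definition Top : form := Neg (And (Var p0) (Neg (Var p0))).
Definition Bot : form := Neg Top.
Definition DAnn (f g : form) : form := Neg (Ann f (Neg g)).
Definition DGAnn (G : {set A}) (f g : form) : form := Neg (GAnn G f (Neg g)).

Fixpoint is_el (f : form) : bool :=
  match f with
  | Var _ => true
  | Neg g => is_el g
  | And g h => is_el g && is_el h
  | Kn _ g => is_el g
  | _ => false
  end.

Fixpoint bigAnd (s : seq form) : form :=
  match s with
  | [::] => Top
  | [:: x] => x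
  | x :: s' => And x (bigAnd s')
  end.

Definition conjG (G : {set A}) (f : A -> form) : form :=
  bigAnd [seq Kn i (f i) | i <- enum G].

Definition elFam (G : {set A}) (f : A -> form) : Prop :=
  forall i, i \in G -> is_el (f i).

Record model : Type := Model {
  W : Type;
  Rel : A -> W -> W -> Prop;
  Val : P -> W -> Prop
}.

Definition epistemic (M : model) : Prop :=
  inhabited (W M) /\
  forall a, (forall w : W M, Rel a w w) /\ (forall w v : W M, Rel a w v -> Rel a v w) /\
            (forall w v u : W M, Rel a w v -> Rel a v u -> Rel a w u).

(* Truth in the restriction of M to the set of worlds D (D models the
   successive model restrictions M^phi produced by announcements). *)

(* Satisfaction on the L_EL fragment (used to evaluate psi_G in L^G_EL). *)
Fixpoint satEL (M : model) (D : W M -> Prop) (w : W M) (f : form) : Prop :=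
  match f with
  | Var p => Val p w
  | Neg g => ~ satEL D w g
  | And g h => satEL D w g /\ satEL D w h
  | Kn a g => forall v, D v -> Rel a w v -> satEL D v g
  | _ => False
  end.

Fixpoint sat (M : model) (D : W M -> Prop) (w : W M) (f : form) : Prop :=
  match f with
  | Var p => Val p w
  | Neg g => ~ sat D w g
  | And g h => sat D w g /\ sat D w h
  | Kn a g => forall v, D v -> Rel a w v -> sat D v g
  | Ann g h => sat D w g -> sat (fun v => D v /\ sat D v g) w h
  | GAnn G chi g =>
      sat D w chi /\
      forall psi, elFam G psi ->
        (satEL D w (conjG G psi) /\ sat D w chi) ->
        sat (fun v => D v /\ (satEL D v (conjG G psi) /\ sat D v chi)) w g
  | CoalAnn G g =>
      forall psi, elFam G psi -> exists chi, elFam (~: G) chi /\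
        (satEL D w (conjG G psi) ->
          (satEL D w (conjG G psi) /\ satEL D w (conjG (~: G) chi)) /\
          sat (fun v => D v /\ (satEL D v (conjG G psi) /\
                                satEL D v (conjG (~: G) chi))) w g)
  end.

Definition models (M : model) (w : W M) (f : form) : Prop :=
  sat (fun _ => True) w f.

Lemma satEL_sat (M : model) (D : W M -> Prop) (f : form) :
  is_el f -> forall w, satEL D w f <-> sat D w f.
Proof.
elim: f D => //=.
- by move=> g IH D Hg w; split=> H H'; apply: H; apply/(IH D Hg w).
- move=> g IHg h IHh D /andP[Hg Hh] w.
  by split=> -[H1 H2]; split; [apply/IHg|apply/IHh|apply/IHg|apply/IHh].
- move=> a g IH D Hg w; split=> H v Dv Rv; apply/(IH D Hg v); exact: H.
Qed.

(* Instances of propositional tautologies: true under every boolean valuation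
   of the maximal non-(Neg/And) subformulas. *)
Fixpoint pval (v : form -> bool) (f : form) : bool :=
  match f with
  | Neg g => ~~ pval v g
  | And g h => pval v g && pval v h
  | _ => v f
  end.
Definition ptaut (f : form) : Prop := forall v, pval v f = true.

Inductive nform : Type :=
| NHole : nform
| NImp : form -> nform -> nform
| NK : A -> nform -> nform
| NAnn : form -> nform -> nform.

Fixpoint nfill (e : nform) (f : form) : form :=
  match e with
  | NHole => f
  | NImp g e' => Imp g (nfill e' f)
  | NK a e' => Kn a (nfill e' f)
  | NAnn g e' => Ann g (nfill e' f)
  end.

Inductive CoRGAL : form -> Prop :=
| A0 f : ptaut f -> CoRGAL f
| A1 a f g : CoRGAL (Imp (Kn a (Imp f g)) (Imp (Kn a f) (Kn a g)))
| A2 a f : CoRGAL (Imp (Kn a f) f)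
| A3 a f : CoRGAL (Imp (Kn a f) (Kn a (Kn a f)))
| A4 a f : CoRGAL (Imp (Neg (Kn a f)) (Kn a (Neg (Kn a f))))
| A5 f p : CoRGAL (Iff (Ann f (Var p)) (Imp f (Var p)))
| A6 f g : CoRGAL (Iff (Ann f (Neg g)) (Imp f (Neg (Ann f g))))
| A7 f g h : CoRGAL (Iff (Ann f (And g h)) (And (Ann f g) (Ann f h)))
| A8 f a g : CoRGAL (Iff (Ann f (Kn a g)) (Imp f (Kn a (Ann f g))))
| A9 f g h : CoRGAL (Iff (Ann f (Ann g h)) (Ann (And f (Ann f g)) h))
| A10 G chi f psi : elFam G psi ->
    CoRGAL (Imp (GAnn G chi f) (And chi (Ann (And (conjG G psi) chi) f)))
| A11 G f psi : elFam G psi ->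
    CoRGAL (Imp (CoalAnn G f) (DGAnn (~: G) (conjG G psi) f))
| R0 f g : CoRGAL (Imp f g) -> CoRGAL f -> CoRGAL g
| R1 a f : CoRGAL f -> CoRGAL (Kn a f)
| R2 g f : CoRGAL f -> CoRGAL (Ann g f)
| R3 G chi f : CoRGAL f -> CoRGAL (GAnn G chi f)
| R4 G f : CoRGAL f -> CoRGAL (CoalAnn G f)
| R5 e G chi f :
    (forall psi, elFam G psi ->
       CoRGAL (nfill e (And chi (Ann (And (conjG G psi) chi) f)))) ->
    CoRGAL (nfill e (GAnn G chi f))
| R6 e G f :
    (forall psi, elFam G psi -> CoRGAL (nfill e (DGAnn (~: G) (conjG G psi) f))) ->
    CoRGAL (nfill e (CoalAnn G f)).

Definition theory (x : form -> Prop) : Prop :=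
  (forall f, CoRGAL f -> x f) /\
  (forall f g, x (Imp f g) -> x f -> x g) /\
  (forall e G chi f,
     (forall psi, elFam G psi -> x (nfill e (And chi (Ann (And (conjG G psi) chi) f)))) ->
     x (nfill e (GAnn G chi f))) /\
  (forall e G f,
     (forall psi, elFam G psi -> x (nfill e (DGAnn (~: G) (conjG G psi) f))) ->
     x (nfill e (CoalAnn G f))).

Definition consistent (x : form -> Prop) : Prop := ~ x Bot.
Definition maximal (x : form -> Prop) : Prop := forall f, x f \/ x (Neg f).
Definition mct (x : form -> Prop) : Prop := theory x /\ consistent x /\ maximal x.

Definition WC : Type := {x : form -> Prop | mct x}.

Definition canon : model :=
  @Model WC
    (fun a (x y : WC) => forall f, proj1_sig x (Kn a f) <-> proj1_sig y (Kn a f))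
    (fun p (x : WC) => proj1_sig x (Var p)).

End CoRGAL.

(* The group announcement [G, chi] phi and the coalition announcement [<G>] phi
   are infinitary: semantically each is the conjunction of its "premises" over
   all psi_G, and (A10)/(A11) together with the omega-rules (R5)/(R6) make
   maximal consistent theories respect exactly this.  Because (R5)/(R6) hold
   under any necessity form, a Lindenbaum construction along an enumeration of
   the formulas can add, for each refuted instance of an omega-rule conclusion,
   the refutation of one premise, so every consistent theory extends to a
   maximal consistent one.  The truth lemma is then proved by induction on a
   lexicographic measure (depth of group/coalition announcements, then a
   weighted size) that decreases along the reduction axioms (A5)-(A9) and from
   an omega-formula to its premises, the latter because psi_G is epistemic. *)
From HB Require Import structures.
From mathcomp Require Import all_boot zify.
From Stdlib Require Import Classical ClassicalEpsilon FunctionalExtensionality PropExtensionality.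
Set Implicit Arguments. Unset Strict Implicit. Unset Printing Implicit Defensive.

Section Completeness.
Variables (A : finType) (P : countType) (p0 : P).
Local Notation form := (form A P).
Local Notation Top := (Top A p0).
Local Notation CoRGAL := (CoRGAL p0).
Local Notation theory := (theory p0).
Local Notation consistent := (consistent p0).
Local Notation mct := (mct p0).
Local Notation conjG := (conjG p0).

Ltac taut := let v := fresh "v" in move=> v /=;
  repeat match goal with |- context [pval v ?f] => case: (pval v f) end;
  repeat match goal with |- context [v ?f] => case: (v f) end; done.

Definition is_omega (F : form) : bool :=
  match F with GAnn _ _ _ | CoalAnn _ _ => true | _ => false end.

Definition omega_group (F : form) : {set A} :=
  match F with GAnn G _ _ | CoalAnn G _ => G | _ => set0 end.

(* The premise of (R5), resp. (R6), for [psi_G]; junk on other formulas. *)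
Definition omega_premise (F : form) (psi : A -> form) : form :=
  match F with
  | GAnn G chi f => And chi (Ann (And (conjG G psi) chi) f)
  | CoalAnn G f => DGAnn (~: G) (conjG G psi) f
  | _ => F
  end.

Lemma omega_axiom F psi : is_omega F -> elFam (omega_group F) psi ->
  CoRGAL (Imp F (omega_premise F psi)).
Proof. by case: F => //= *; [apply: A10 | apply: A11]. Qed.

Lemma nfill_omega_inj e1 e2 F1 F2 : is_omega F1 -> is_omega F2 ->
  nfill e1 F1 = nfill e2 F2 -> e1 = e2 /\ F1 = F2.
Proof.
move=> H1 H2; elim: e1 e2 => [|g e IH|a e IH|g e IH] [|g' e'|a' e'|g' e'] //=;
  rewrite /Imp; try by move=> E; subst; move: H1 H2 => /=.
all: by case=> -> /IH [-> ->].
Qed.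

Section TheoryFacts.
Variable t : form -> Prop.
Hypothesis t_theory : theory t.

Lemma theory_thm f : CoRGAL f -> t f.
Proof. by case: t_theory => H _; apply: H. Qed.

Lemma theory_mp f g : t (Imp f g) -> t f -> t g.
Proof. by case: t_theory => _ [H _]; apply: H. Qed.

Lemma theory_taut1 f g : ptaut (Imp f g) -> t f -> t g.
Proof. by move=> H; apply: theory_mp; apply: theory_thm; apply: A0. Qed.

Lemma theory_taut2 f g h : ptaut (Imp f (Imp g h)) -> t f -> t g -> t h.
Proof. by move=> H Hf Hg; apply: (theory_mp _ Hg); apply: (theory_taut1 H). Qed.

Lemma theory_omega e F : is_omega F ->
  (forall psi, elFam (omega_group F) psi -> t (nfill e (omega_premise F psi))) ->
  t (nfill e F).
Proof.
case: t_theory => _ [_ [R5t R6t]].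
by case: F => //= [G chi f _ | G f _]; [apply: R5t | apply: R6t].
Qed.
End TheoryFacts.

Lemma theory_intro t :
  (forall f, CoRGAL f -> t f) ->
  (forall f g, t (Imp f g) -> t f -> t g) ->
  (forall e F, is_omega F ->
     (forall psi, elFam (omega_group F) psi -> t (nfill e (omega_premise F psi))) ->
     t (nfill e F)) ->
  theory t.
Proof.
move=> Hthm Hmp Homega; split=> //; split=> //; split.
- by move=> e G chi f; apply: (Homega e (GAnn G chi f)).
- by move=> e G f; apply: (Homega e (CoalAnn G f)).
Qed.

(* [extend t g] is [t] plus [g] (deduction theorem); it is again a theory
   because the omega-rules hold under the necessity form [g -> _]. *)
Definition extend (t : form -> Prop) g : form -> Prop := fun h => t (Imp g h).
Definition box a (t : form -> Prop) : form -> Prop := fun h => t (Kn a h).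

Lemma extend_theory t g : theory t -> theory (extend t g).
Proof.
move=> Ht; apply: theory_intro.
- by move=> f Hf; apply: (theory_taut1 Ht (f := f)); [taut | exact: theory_thm].
- by move=> f h H1 H2; apply: (theory_taut2 Ht _ H1 H2); taut.
- by move=> e F HF H; apply: (theory_omega Ht (e := NImp g e) HF H).
Qed.

Lemma extend_sub t g h : theory t -> t h -> extend t g h.
Proof. by move=> Ht; apply: theory_taut1 => //; taut. Qed.

Lemma extend_in t g : theory t -> extend t g g.
Proof. by move=> Ht; apply: (theory_thm Ht); apply: A0; taut. Qed.

Lemma box_theory t a : theory t -> theory (box a t).
Proof.
move=> Ht; apply: theory_intro.
- by move=> f Hf; apply: (theory_thm Ht); apply: R1.
- move=> f h H1 H2; apply: (theory_mp Ht _ H2); apply: (theory_mp Ht _ H1).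
  exact/(theory_thm Ht)/A1.
- by move=> e F HF H; apply: (theory_omega Ht (e := NK a e) HF H).
Qed.

Section MaximalConsistent.
Variable x : form -> Prop.
Hypothesis x_mct : mct x.
Let x_theory : theory x := proj1 x_mct.

Lemma mct_neg f : x (Neg f) <-> ~ x f.
Proof.
case: x_mct => _ [Hc Hm]; split; last by case: (Hm f).
by move=> H1 H2; apply: Hc; apply: (theory_taut2 x_theory _ H2 H1); taut.
Qed.

Lemma mct_and f g : x (And f g) <-> x f /\ x g.
Proof.
split; last by case=> H1 H2; apply: (theory_taut2 x_theory _ H1 H2); taut.
by move=> H; split; apply: (theory_taut1 x_theory _ H); taut.
Qed.

Lemma mct_imp f g : x (Imp f g) <-> (x f -> x g).
Proof. by rewrite /Imp mct_neg mct_and mct_neg; split; [move=> H Hf; apply: NNPP|]; tauto. Qed.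

Lemma mct_iff f g : CoRGAL (Iff f g) -> (x f <-> x g).
Proof. by move/(theory_thm x_theory); rewrite /Iff mct_and !mct_imp; tauto. Qed.

Lemma mct_Ann_mono f B C : x f -> CoRGAL (Imp B C) -> x (Ann f B) -> x (Ann f C).
Proof.
move=> Hf HBC HB.
have : x (Ann f (Imp B C)) by apply: (theory_thm x_theory); apply: R2.
rewrite /Imp !(mct_iff (A6 p0 _ _)) !mct_imp // !mct_neg //.
by rewrite (mct_iff (A7 p0 _ _ _)) mct_and (mct_iff (A6 p0 _ _)) mct_imp // mct_neg; tauto.
Qed.
End MaximalConsistent.

Fixpoint form_tree (f : form) : GenTree.tree (P + (A + {set A})) :=
  match f with
  | Var p => GenTree.Leaf (inl p)
  | Neg g => GenTree.Node 0 [:: form_tree g]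
  | And g h => GenTree.Node 1 [:: form_tree g; form_tree h]
  | Kn a g => GenTree.Node 2 [:: GenTree.Leaf (inr (inl a)); form_tree g]
  | Ann g h => GenTree.Node 3 [:: form_tree g; form_tree h]
  | GAnn G c g => GenTree.Node 4 [:: GenTree.Leaf (inr (inr G)); form_tree c; form_tree g]
  | CoalAnn G g => GenTree.Node 5 [:: GenTree.Leaf (inr (inr G)); form_tree g]
  end.

Fixpoint tree_form (t : GenTree.tree (P + (A + {set A}))) : option form :=
  match t with
  | GenTree.Leaf (inl p) => Some (Var A p)
  | GenTree.Node 0 [:: t1] => omap (@Neg A P) (tree_form t1)
  | GenTree.Node 1 [:: t1; t2] =>
      if (tree_form t1, tree_form t2) is (Some g, Some h) then Some (And g h) else None
  | GenTree.Node 2 [:: GenTree.Leaf (inr (inl a)); t1] => omap (Kn a) (tree_form t1)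
  | GenTree.Node 3 [:: t1; t2] =>
      if (tree_form t1, tree_form t2) is (Some g, Some h) then Some (Ann g h) else None
  | GenTree.Node 4 [:: GenTree.Leaf (inr (inr G)); t1; t2] =>
      if (tree_form t1, tree_form t2) is (Some c, Some g) then Some (GAnn G c g) else None
  | GenTree.Node 5 [:: GenTree.Leaf (inr (inr G)); t1] => omap (CoalAnn G) (tree_form t1)
  | _ => None
  end.

Lemma form_treeK : pcancel form_tree tree_form.
Proof. by elim=> //= [g -> | g -> h -> | a g -> | g -> h -> | G c -> g -> | G g ->]. Qed.

HB.instance Definition _ := Countable.copy form (pcan_type form_treeK).

Definition nth_form (n : nat) : form := odflt Top (unpickle n).

Lemma pickle_formK f : nth_form (pickle f) = f.
Proof. by rewrite /nth_form pickleK. Qed.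

Section Lindenbaum.

Definition good (t : form -> Prop) := theory t /\ consistent t.

Lemma good_noncontra t f : good t -> t f -> t (Neg f) -> False.
Proof. by case=> Ht Hc H1 H2; apply: Hc; apply: (theory_taut2 Ht _ H1 H2); taut. Qed.

Lemma extend_good t f : good t -> consistent (extend t f) -> good (extend t f).
Proof. by case=> Ht _ Hc; split=> //; apply: extend_theory. Qed.

Lemma extend_consistent t f :
  good t -> consistent (extend t f) \/ consistent (extend t (Neg f)).
Proof.
case=> Ht Hc; apply: NNPP => /not_or_and [/NNPP H1 /NNPP H2].
by apply: Hc; apply: (theory_taut2 Ht _ H1 H2); taut.
Qed.

(* Contrapositive of (R5)/(R6). *)
Lemma omega_witness t e F : good t -> is_omega F -> t (Neg (nfill e F)) ->
  exists2 psi, elFam (omega_group F) psi &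
    consistent (extend t (Neg (nfill e (omega_premise F psi)))).
Proof.
move=> [Ht Hc] HF Hn; apply: NNPP => Hnone; apply: (good_noncontra (conj Ht Hc) _ Hn).
apply: (theory_omega Ht HF) => psi Hpsi; apply: NNPP => Hno; apply: Hnone.
by exists psi => // Hb; apply: Hno; apply: (theory_taut1 Ht _ Hb); taut.
Qed.

Definition witnessed (t : form -> Prop) f := forall e F, is_omega F -> f = nfill e F ->
  t (Neg f) -> exists2 psi, elFam (omega_group F) psi & t (Neg (nfill e (omega_premise F psi))).

Definition decides (t t' : form -> Prop) f :=
  [/\ good t', forall h, t h -> t' h, t' f \/ t' (Neg f) & witnessed t' f].

Lemma decides_ex t f : good t -> exists t', decides t t' f.
Proof.
move=> Hg; have Ht := proj1 Hg.
case: (classic (consistent (extend t f))) => [Hc | Hnc].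
  have Hg' := extend_good Hg Hc.
  exists (extend t f); split=> //; [by move=> h; apply: extend_sub | by left; apply: extend_in |].
  by move=> e F _ _ Hn; case: (good_noncontra Hg' (extend_in _ Ht) Hn).
have Hg1 : good (extend t (Neg f)).
  by apply: extend_good => //; case: (extend_consistent f Hg).
have Hsub1 h : t h -> extend t (Neg f) h by apply: extend_sub.
have Hn1 : extend t (Neg f) (Neg f) by apply: extend_in.
case: (classic (exists e F, is_omega F /\ f = nfill e F)) => [[e [F [HF Hf]]] | Hno].
  have Hrefuted : extend t (Neg f) (Neg (nfill e F)) by rewrite -Hf.
  have [psi Hpsi Hc2] := omega_witness Hg1 HF Hrefuted.
  have Hsub2 := extend_sub (Neg (nfill e (omega_premise F psi))) (proj1 Hg1).
  exists (extend (extend t (Neg f)) (Neg (nfill e (omega_premise F psi)))).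
  split; [exact: extend_good | by move=> h /Hsub1/Hsub2 | by right; apply: Hsub2 |].
  move=> e' F' HF' Hf' _; have [<- <-] := nfill_omega_inj HF HF' (etrans (esym Hf) Hf').
  by exists psi => //; apply: extend_in; case: Hg1.
exists (extend t (Neg f)); split=> //; first by right.
by move=> e F HF Hf; case: Hno; exists e, F.
Qed.

Variable t0 : form -> Prop.
Hypothesis t0_good : good t0.

Definition decide_next (n : nat) (s : {t | good t}) : {t | good t} :=
  let H := decides_ex (nth_form n) (proj2_sig s) in
  exist _ (proj1_sig (constructive_indefinite_description _ H))
          (let: And4 Hg _ _ _ := proj2_sig (constructive_indefinite_description _ H) in Hg).

Fixpoint chain n : {t | good t} :=
  if n is m.+1 then decide_next m (chain m) else exist _ t0 t0_good.

Local Notation ch n := (proj1_sig (chain n)).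

Lemma chain_good n : good (ch n). Proof. exact: proj2_sig (chain n). Qed.

Lemma chain_decides n : decides (ch n) (ch n.+1) (nth_form n).
Proof. by rewrite /= /decide_next /=; case: constructive_indefinite_description. Qed.

Lemma chain_mono n m : n <= m -> forall h, ch n h -> ch m h.
Proof.
elim: m => [|m IH]; first by rewrite leqn0 => /eqP ->.
rewrite leq_eqVlt => /orP [/eqP -> //|]; rewrite ltnS => /IH H h /H.
by case: (chain_decides m) => _ Hs _ _; apply: Hs.
Qed.

Definition chain_union h := exists n, ch n h.

Lemma chain_union2 h k : chain_union h -> chain_union k ->
  exists n, ch n h /\ ch n k.
Proof.
move=> [n Hn] [m Hm]; exists (maxn n m).
by split; [apply: (chain_mono (leq_maxl n m)) | apply: (chain_mono (leq_maxr n m))].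
Qed.

Lemma chain_union_noncontra h : chain_union h -> chain_union (Neg h) -> False.
Proof.
move=> H1 H2; case: (chain_union2 H1 H2) => n [Ha Hb].
exact: (good_noncontra (chain_good n) Ha Hb).
Qed.

Lemma chain_union_omega e F : is_omega F ->
  (forall psi, elFam (omega_group F) psi -> chain_union (nfill e (omega_premise F psi))) ->
  chain_union (nfill e F).
Proof.
move=> HF H; set n := pickle (nfill e F).
case: (chain_decides n) => _ _; rewrite pickle_formK => -[Hin | Hneg] Hwit.
  by exists n.+1.
case: (Hwit e F HF erefl Hneg) => psi Hpsi Hn.
by case: (chain_union_noncontra (H psi Hpsi)); exists n.+1.
Qed.

Lemma chain_union_mct : mct chain_union.
Proof.
split; [apply: theory_intro | split].
- by move=> f Hf; exists 0; apply: (theory_thm (proj1 (chain_good 0))).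
- move=> f g H1 H2; case: (chain_union2 H1 H2) => n [Ha Hb].
  by exists n; apply: (theory_mp (proj1 (chain_good n)) Ha Hb).
- exact: chain_union_omega.
- by move=> [n Hn]; apply: (proj2 (chain_good n)).
- move=> f; case: (chain_decides (pickle f)) => _ _; rewrite pickle_formK.
  by case=> H _; [left | right]; exists (pickle f).+1.
Qed.

Lemma lindenbaum : exists2 y, mct y & forall h, t0 h -> y h.
Proof. by exists chain_union; [apply: chain_union_mct | exists 0]. Qed.
End Lindenbaum.

(* The set {h | K_a h in x} together with ~f is consistent; by (A3) and (A4)
   any maximal extension has the same K_a-formulas as x. *)
Lemma mct_Kn_witness (x : form -> Prop) a f : mct x -> ~ x (Kn a f) ->
  exists y, [/\ mct y, forall h, x (Kn a h) <-> y (Kn a h) & ~ y f].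
Proof.
move=> Hx Hnk; have Ht := proj1 Hx.
have Hg : good (extend (box a x) (Neg f)).
  split; first exact/extend_theory/box_theory.
  move=> Hb; apply: Hnk; apply: (theory_mp Ht _ Hb); apply: (theory_mp Ht).
    exact/(theory_thm Ht)/A1.
  by apply: (theory_thm Ht); apply: R1; apply: A0; taut.
have Hbt := box_theory a Ht.
case: (lindenbaum Hg) => y Hy Hsub; exists y; split=> //.
- move=> h; split=> H.
    apply: Hsub; apply: extend_sub => //; rewrite /box.
    by apply: (theory_mp Ht _ H); apply: (theory_thm Ht); apply: A3.
  apply: NNPP => /(mct_neg Hx) Hn.
  have Hk : x (Kn a (Neg (Kn a h))).
    by apply: (theory_mp Ht _ Hn); apply: (theory_thm Ht); apply: A4.
  by have /(mct_neg Hy) := Hsub _ (extend_sub _ Hbt Hk).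
- by apply/(mct_neg Hy); apply: Hsub; apply: extend_in.
Qed.

Lemma bigAnd_el s : all (@is_el A P) s -> is_el (bigAnd p0 s).
Proof. by elim: s => [|f [|g s] IH] //= /andP [-> /IH]. Qed.

Lemma conjG_el G (psi : A -> form) : elFam G psi -> is_el (conjG G psi).
Proof.
move=> H; apply: bigAnd_el; rewrite all_map; apply/allP => i /=.
by rewrite mem_enum => /H.
Qed.

Lemma elFam_Top G : elFam G (fun=> Top). Proof. by []. Qed.

Section Semantics.
Variable M : model A P.
Local Notation sat := (@sat A P p0 M).

Lemma satEL_conjG D v G psi : elFam G psi ->
  satEL D v (conjG G psi) = sat D v (conjG G psi).
Proof. by move/conjG_el => H; apply: propositional_extensionality; apply: satEL_sat. Qed.

Lemma domain_ext (D1 D2 : W M -> Prop) : (forall v, D1 v <-> D2 v) -> D1 = D2.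
Proof. by move=> H; apply: functional_extensionality => v; apply: propositional_extensionality. Qed.

Lemma sat_Ann_Var D w f p : sat D w (Ann f (Var A p)) <-> sat D w (Imp f (Var A p)).
Proof. by rewrite /Imp /=; split; [tauto | move=> H Hf; apply: NNPP; tauto]. Qed.

Lemma sat_Ann_Neg D w f g : sat D w (Ann f (Neg g)) <-> sat D w (Imp f (Neg (Ann f g))).
Proof. by rewrite /Imp /=; tauto. Qed.

Lemma sat_Ann_And D w f g h :
  sat D w (Ann f (And g h)) <-> sat D w (And (Ann f g) (Ann f h)).
Proof. by rewrite /=; tauto. Qed.

Lemma sat_Ann_Kn D w f a g : sat D w (Ann f (Kn a g)) <-> sat D w (Imp f (Kn a (Ann f g))).
Proof.
rewrite /Imp /=; split.
- by move=> H [Hf Hn]; apply: Hn => v Dv R Hfv; apply: H.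
- move=> H Hf v [Dv Hfv] R; apply: NNPP => Hn; apply: H; split=> // K.
  by apply: Hn; apply: K.
Qed.

Lemma sat_Ann_Ann D w f g h :
  sat D w (Ann f (Ann g h)) <-> sat D w (Ann (And f (Ann f g)) h).
Proof.
rewrite /= (@domain_ext (fun v => (D v /\ sat D v f) /\ _)
  (fun v => D v /\ (sat D v f /\ (sat D v f -> sat (fun u => D u /\ sat D u f) v g)))) //.
  by tauto.
by move=> v; tauto.
Qed.

Lemma sat_GAnn D w G c g : sat D w (GAnn G c g) <->
  forall psi, elFam G psi -> sat D w (And c (Ann (And (conjG G psi) c) g)).
Proof.
have Edom psi : elFam G psi ->
    (fun v => D v /\ (satEL D v (conjG G psi) /\ sat D v c)) =
    (fun v => D v /\ (sat D v (conjG G psi) /\ sat D v c)).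
  by move=> Hpsi; apply: domain_ext => v; rewrite satEL_conjG.
rewrite /=; split.
- move=> [Hc H] psi Hpsi; split=> // -[HX _]; rewrite -Edom //.
  by apply: (H psi Hpsi); rewrite satEL_conjG.
- move=> H; split; first by case: (H _ (@elFam_Top G)).
  move=> psi Hpsi [HX Hc]; rewrite Edom //; case: (H psi Hpsi) => _; apply.
  by rewrite -satEL_conjG.
Qed.

Lemma sat_CoalAnn D w G g : sat D w (CoalAnn G g) <->
  forall psi, elFam G psi -> sat D w (DGAnn (~: G) (conjG G psi) g).
Proof.
have Edom psi chi : elFam G psi ->
    (fun v => D v /\ (satEL D v (conjG (~: G) chi) /\ sat D v (conjG G psi))) =
    (fun v => D v /\ (satEL D v (conjG G psi) /\ satEL D v (conjG (~: G) chi))).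
  by move=> Hpsi; apply: domain_ext => v; rewrite (satEL_conjG _ _ Hpsi); tauto.
rewrite /DGAnn /=; split.
- move=> H psi Hpsi [HX Hall]; case: (H psi Hpsi) => chi [Hchi K].
  case: (K _) => [|[_ Hc] Hg]; first by rewrite satEL_conjG.
  by apply: (Hall chi Hchi) => //; rewrite Edom.
- move=> H psi Hpsi; have := H psi Hpsi.
  case: (classic (satEL D w (conjG G psi))) => HX; last first.
    by move=> _; exists (fun=> Top); split; [apply: elFam_Top | move/HX].
  move=> Hn; apply: NNPP => Hne; apply: Hn; split; first by rewrite -satEL_conjG.
  move=> chi Hchi [Hc _] Hg; apply: Hne; exists chi; split=> // _; split=> //.
  by rewrite -Edom.
Qed.

Lemma sat_omega D w F : is_omega F ->
  sat D w F <-> forall psi, elFam (omega_group F) psi -> sat D w (omega_premise F psi).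
Proof. by case: F => //= *; [apply: sat_GAnn | apply: sat_CoalAnn]. Qed.

Lemma sat_Ann_omega D w f F : is_omega F -> sat D w (Ann f F) <->
  forall psi, elFam (omega_group F) psi -> sat D w (Ann f (omega_premise F psi)).
Proof.
move=> HF; rewrite /=; split.
- by move=> H psi Hpsi Hf; apply: (proj1 (sat_omega _ _ HF) (H Hf)).
- by move=> H Hf; apply/sat_omega => // psi Hpsi; apply: H.
Qed.
End Semantics.

(* [odepth] counts nested group/coalition announcements, letting announcements
   add up; [wsize] weights announcements so that (A6) and (A9) decrease it. *)
Fixpoint odepth (f : form) : nat :=
  match f with
  | Var _ => 0
  | Neg g | Kn _ g => odepth g
  | And g h => maxn (odepth g) (odepth h)
  | Ann g h => odepth g + odepth h
  | GAnn _ c g => (odepth c + odepth g).+1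
  | CoalAnn _ g => (odepth g).+2
  end.

Fixpoint wsize (f : form) : nat :=
  match f with
  | Var _ | GAnn _ _ _ | CoalAnn _ _ => 1
  | Neg g | Kn _ g => (wsize g).+1
  | And g h => (wsize g + wsize h).+1
  | Ann g h => (5 + wsize g) * wsize h
  end.

Definition lt_measure (g f : form) :=
  odepth g < odepth f \/ (odepth g = odepth f /\ wsize g < wsize f).

Lemma wsize_gt0 f : 0 < wsize f.
Proof. by elim: f => //= g _ h Hh; rewrite muln_gt0 Hh. Qed.

Lemma measure_ind (Q : form -> Prop) :
  (forall f, (forall g, lt_measure g f -> Q g) -> Q f) -> forall f, Q f.
Proof.
move=> H; suff K n f : odepth f < n -> Q f by move=> f; apply: (K (odepth f).+1).
elim: n f => [//|n IH] f Hf.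
suff K m g : odepth g = n -> wsize g < m -> Q g.
  by case: (ltnP (odepth f) n) => [/IH //|Hn]; apply: (K (wsize f).+1) => //; lia.
elim: m g => [//|m IHm] g Hg Hs.
by apply: H => h [Hh | [Hh Hs']]; [apply: IH | apply: IHm]; lia.
Qed.

Lemma odepth_el f : is_el f -> odepth f = 0.
Proof. by elim: f => //= [g IHg h IHh /andP [/IHg -> /IHh ->]]. Qed.

Lemma odepth_omega_premise F psi : is_omega F -> elFam (omega_group F) psi ->
  odepth (omega_premise F psi) < odepth F.
Proof.
by case: F => //= [G c g | G g] _ /conjG_el/odepth_el ->; lia.
Qed.

Local Notation csat := (@sat A P p0 (canon A p0) (fun _ => True)).

Definition truth_at (f : form) := forall x : WC A p0, proj1_sig x f <-> csat x f.

Lemma truth_reduction f g : CoRGAL (Iff f g) ->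
  (forall w, csat w f <-> csat w g) -> truth_at g -> truth_at f.
Proof. by move=> Hax Hsem Hg x; rewrite (mct_iff (proj2_sig x) Hax) Hsem. Qed.

Lemma truth_Neg g : truth_at g -> truth_at (Neg g).
Proof. by move=> Hg x; rewrite /= mct_neg ?Hg //; apply: proj2_sig. Qed.

Lemma truth_And g h : truth_at g -> truth_at h -> truth_at (And g h).
Proof. by move=> Hg Hh x; rewrite /= mct_and ?Hg ?Hh //; apply: proj2_sig. Qed.

Lemma truth_Kn a g : truth_at g -> truth_at (Kn a g).
Proof.
move=> Hg x; have Hx := proj2_sig x; rewrite /=; split.
- move=> H v _ R; apply/Hg; have Hv := proj1 (proj2_sig v).
  by apply: (theory_mp Hv _ (proj1 (R g) H)); apply/(theory_thm Hv)/A2.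
- move=> H; apply: NNPP => /(mct_Kn_witness Hx) [y [Hy R Hyg]].
  by apply: Hyg; apply/(Hg (exist _ y Hy)); apply: H.
Qed.

Lemma truth_omega F : is_omega F ->
  (forall psi, elFam (omega_group F) psi -> truth_at (omega_premise F psi)) ->
  truth_at F.
Proof.
move=> HF IH x; have Ht := proj1 (proj2_sig x); rewrite sat_omega //; split.
- move=> H psi Hpsi; apply/IH => //.
  by apply: (theory_mp Ht _ H); apply/(theory_thm Ht)/omega_axiom.
- move=> H; apply: (theory_omega Ht (e := NHole A P) HF) => psi Hpsi.
  by apply/IH => //; apply: H.
Qed.

Lemma truth_Ann_omega f F : is_omega F -> truth_at f ->
  (forall psi, elFam (omega_group F) psi -> truth_at (Ann f (omega_premise F psi))) ->
  truth_at (Ann f F).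
Proof.
move=> HF Hf IH x; have Hx := proj2_sig x; rewrite sat_Ann_omega //; split.
- move=> H psi Hpsi; apply/IH => //.
  case: (classic (proj1_sig x f)) => Hxf.
    by apply: (mct_Ann_mono Hx Hxf _ H); apply: omega_axiom.
  (* [f] fails at [x], so the announcement holds vacuously. *)
  by apply/IH => // /Hf.
- move=> H; apply: (theory_omega (proj1 Hx) (e := NAnn f (NHole A P)) HF) => psi Hpsi.
  by apply/IH => //; apply: H.
Qed.

Lemma truth f : truth_at f.
Proof.
elim/measure_ind: f => f IH.
case: f IH => [p|g|g h|a g|f B|G c g|G g] IH.
- by [].
- by apply/truth_Neg/IH; right.
- have Hg := wsize_gt0 g; have Hh := wsize_gt0 h.
  by apply: truth_And; apply: IH; rewrite /lt_measure /=; lia.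
- by apply/truth_Kn/IH; right.
- have Hf := wsize_gt0 f; have HB := wsize_gt0 B.
  have IHf : truth_at f by apply: IH; rewrite /lt_measure /=; nia.
  case: B IH HB => [p|g|g h|a g|g h|G c g|G g] IH HB.
  + apply: (truth_reduction (A5 p0 _ _)) => [w|]; first exact: sat_Ann_Var.
    by apply: IH; rewrite /lt_measure /=; lia.
  + apply: (truth_reduction (A6 p0 _ _)) => [w|]; first exact: sat_Ann_Neg.
    by apply: IH; rewrite /lt_measure /=; nia.
  + apply: (truth_reduction (A7 p0 _ _ _)) => [w|]; first exact: sat_Ann_And.
    by apply: IH; have := wsize_gt0 g; have := wsize_gt0 h; rewrite /lt_measure /=; nia.
  + apply: (truth_reduction (A8 p0 _ _ _)) => [w|]; first exact: sat_Ann_Kn.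
    by apply: IH; rewrite /lt_measure /=; nia.
  + apply: (truth_reduction (A9 p0 _ _ _)) => [w|]; first exact: sat_Ann_Ann.
    apply: IH; rewrite /lt_measure /=; right; split; first lia.
    have Hg := wsize_gt0 g; have Hh := wsize_gt0 h.
    by rewrite mulnA ltn_pmul2r //; nia.
  + apply: truth_Ann_omega => // psi Hpsi; apply: IH; left.
    by have := @odepth_omega_premise (GAnn G c g) psi isT Hpsi; rewrite /=; lia.
  + apply: truth_Ann_omega => // psi Hpsi; apply: IH; left.
    by have := @odepth_omega_premise (CoalAnn G g) psi isT Hpsi; rewrite /=; lia.
- by apply: truth_omega => // psi Hpsi; apply/IH; left; apply: odepth_omega_premise.
- by apply: truth_omega => // psi Hpsi; apply/IH; left; apply: odepth_omega_premise.
Qed.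

End Completeness.

Theorem mainTheorem14 (A : finType) (P : countType) (p0 : P)
    (phi : form A P) (x : @WC A P p0) :
  proj1_sig x phi <-> @models A P p0 (@canon A P p0) x phi.
Proof. exact: truth. Qed.
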